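(* Let $n\ge1$, $G\le S_n$ and $\chi:G\to\mathbb{C}$ any function. For every $\sigma\in S_n$, $$d_\chi^G(S_\sigma)=\sum_{\tau\in X_\sigma}\hat\chi(\tau).$$
   Context: $S_n$ is the symmetric group on $[n]=\{1,\dots,n\}$. For $G\le S_n$ and $\chi:G\to\mathbb C$, $\hat\chi:S_n\to\mathbb C$ is the extension of $\chi$ that vanishes outside $G$, and the generalized matrix function $d_\chi^G:M_n(\mathbb C)\to\mathbb C$ is $d_\chi^G(A)=\sum_{\sigma\in S_n}\hat\chi(\sigma)\prod_{i=1}^n A_{i\,\sigma(i)}$. For $\sigma\in S_n$, $S_\sigma$ is the $n\times n$ $0/1$ matrix with $(S_\sigma)_{ij}=1$ iff $\sigma(i)=j$ or $\sigma^{-1}(i)=j$. Every $\sigma\in S_n$ has a unique (up to order) decomposition $\sigma=\sigma_1\cdots\sigma_k$ into pairwise disjoint cycles of length at least $2$ ($k=0$ for the identity). For a cycle $\omega=(a_1\,a_2\,\dots\,a_s)$ with $s$ even, let $S(\omega)=\{(a_1\,a_2)(a_3\,a_4)\cdots(a_{s-1}\,a_s),\ (a_s\,a_1)(a_2\,a_3)\cdots(a_{s-2}\,a_{s-1})\}$. Set $X_\omega=\{\omega,\omega^{-1}\}$ if $s$ is odd and $X_\omega=\{\omega,\omega^{-1}\}\cup S(\omega)$ if $s$ is even; for $\sigma=\sigma_1\cdots\sigma_k$ set $X_\sigma=\{\tau_1\cdots\tau_k:\tau_j\in X_{\sigma_j}\}$ ($X_{\mathrm{id}}=\{\mathrm{id}\}$).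 *)

From HB Require Import structures.
From mathcomp Require Import all_boot all_order all_algebra all_fingroup all_field.
Set Implicit Arguments. Unset Strict Implicit. Unset Printing Implicit Defensive.
Import GRing.Theory Num.Theory.
Local Open Scope ring_scope.

Definition chihat n (G : {group 'S_n}) (chi : 'S_n -> algC) (s : 'S_n) : algC :=
  if s \in G then chi s else 0.

Definition gmf n (G : {group 'S_n}) (chi : 'S_n -> algC) (A : 'M[algC]_n) : algC :=
  \sum_(s : 'S_n) chihat G chi s * \prod_(i < n) A i (s i).

Definition Smat n (s : 'S_n) : 'M[algC]_n :=
  \matrix_(i < n, j < n) (if (s i == j) || ((s^-1)%g i == j) then 1 else 0).

Section Cycles.
Variable T : finType.
Local Open Scope group_scope.

Fixpoint prod_pairs (a : seq T) : {perm T} :=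
  match a with
  | x :: y :: r => tperm x y * prod_pairs r
  | _ => 1
  end.

Definition psupp (w : {perm T}) : {set T} := [set x | w x != x].

(* X_omega for a cycle omega = (a1 ... as), with a1 any point of the support
   and a_{k+1} = omega a_k;
   S(omega) = { (a1 a2)...(a_{s-1} a_s), (a_s a1)(a2 a3)...(a_{s-2} a_{s-1}) } *)
Definition Xcyc (w : {perm T}) : {set {perm T}} :=
  let s := #|psupp w| in
  if odd s then [set w; w^-1]
  else if [pick x in psupp w] is Some x then
    let a := traject w x s in
    [set w; w^-1; prod_pairs a; prod_pairs (rotr 1 a)]
  else [set w; w^-1].

Definition cycles (s : {perm T}) : {set {perm T}} :=
  [set restr_perm O s | O in [set O in porbits s | 1 < #|O|]%N].

Definition Xlist (l : seq {perm T}) : {set {perm T}} :=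
  foldr (fun (w : {perm T}) (acc : {set {perm T}}) => [set t * u | t in Xcyc w, u in acc]) [set 1] l.

Definition Xperm (s : {perm T}) : {set {perm T}} := Xlist (enum (cycles s)).
End Cycles.

From HB Require Import structures.
From mathcomp Require Import all_boot all_order all_algebra all_fingroup all_field.
From mathcomp Require Import zify.
Set Implicit Arguments. Unset Strict Implicit. Unset Printing Implicit Defensive.

(* A term of [gmf G chi (Smat sigma)] is [chihat G chi tau] when [tau x] is
   [sigma x] or [sigma^-1 x] for every [x] ("tau is compatible with sigma"), and 0
   otherwise.  A compatible [tau] stabilises the support of every cycle of [sigma],
   so it factors uniquely into permutations compatible with the single cycles.  On a
   cycle [a_0 ... a_(s-1)], injectivity of [tau] makes the direction in which [tau]
   moves [a_k] and [a_(k+2)] the same: for odd [s] this leaves only [omega] and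
   [omega^-1], for even [s] the directions at [a_0] and [a_1] determine [tau], which
   gives [omega], [omega^-1] and the two perfect matchings [S(omega)]. *)

Lemma rotr1_traject (U : Type) (f : U -> U) x m : iter m.+1 f x = x ->
  rotr 1 (traject f x m.+1) = traject f (iter m f x) m.+1.
Proof. by move=> fx; rewrite trajectSr rotr1_rcons /= -iterS fx. Qed.

Section CompatiblePerms.
Variable T : finType.
Local Open Scope group_scope.
Implicit Types (S : {set T}) (w p t u v : {perm T}) (l : seq {perm T}) (b : seq T).

(* The permutations [t] with [Smat w x (t x) = 1] for all [x]. *)
Definition compatible w : {set {perm T}} :=
  [set t : {perm T} | [forall x, (t x == w x) || (t x == w^-1 x)]].

Lemma compatibleP w t :
  reflect (forall x, t x = w x \/ t x = w^-1 x) (t \in compatible w).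
Proof. by rewrite inE; apply: (iffP forallP) => tw x; apply/pred2P/tw. Qed.

Lemma perm_onE S w : perm_on S w = (psupp w \subset S).
Proof. by apply: eq_subset => x; rewrite !inE. Qed.

Lemma perm_on_psupp w : perm_on (psupp w) w.
Proof. by rewrite perm_onE. Qed.

Lemma compatible_perm_on w t : t \in compatible w -> perm_on (psupp w) t.
Proof.
move=> /compatibleP tw; apply/subsetP => x; apply: contraR => x_out /=.
have w_on := perm_on_psupp w; have wV_on := perm_onV w_on.
by case: (tw x) => ->; rewrite ?(out_perm w_on x_out) ?(out_perm wV_on x_out) ?eqxx.
Qed.

Lemma compatible_id w : w \in compatible w.
Proof. by apply/compatibleP; left. Qed.

Lemma compatibleV w : w^-1 \in compatible w.
Proof. by apply/compatibleP; right. Qed.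

Lemma compatible1 : compatible 1 = [set 1].
Proof.
apply/setP => t; rewrite in_set1; apply/compatibleP/eqP => [t1|-> x]; last by left.
by apply/permP => x; rewrite perm1; case: (t1 x) => ->; rewrite ?invg1 perm1.
Qed.

Lemma astabs_permP S t : reflect (forall x, (t x \in S) = (x \in S)) (t \in 'N(S | 'P)).
Proof. exact: (@astabsP _ _ 'P S t). Qed.

Lemma mul_perm_onE S u v x : perm_on S u -> perm_on (~: S) v ->
  (u * v) x = if x \in S then u x else v x.
Proof.
move=> uS vS; rewrite permM; case: ifP => xS; last by rewrite (out_perm uS) ?xS.
by rewrite (out_perm vS) // inE negbK (perm_closed _ uS).
Qed.

(* A permutation compatible with [w * p] stabilises [psupp w], so it splits into
   its restrictions to [psupp w] and to the complement. *)
Lemma compatibleM w p : perm_on (~: psupp w) p ->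
  [set u * v | u in compatible w, v in compatible p] = compatible (w * p).
Proof.
set S := psupp w => pS; have wS : perm_on S w := perm_on_psupp w.
have wpE x : (w * p) x = if x \in S then w x else p x by rewrite (mul_perm_onE _ wS).
have wpVE x : (w * p)^-1 x = if x \in S then w^-1 x else p^-1 x.
  rewrite (perm_onC wS pS) ?disjoints_subset ?setCK // invMg.
  by rewrite (mul_perm_onE _ (perm_onV wS) (perm_onV pS)).
apply/setP => t; apply/imset2P/compatibleP => [[u v uw vp ->{t}] x|tc].
  have vS : perm_on (~: S) v.
    by apply: subset_trans (compatible_perm_on vp) _; rewrite -perm_onE.
  rewrite (mul_perm_onE _ (compatible_perm_on uw) vS) wpE wpVE.
  by case: ifP => _; apply/compatibleP.
have tS : t \in 'N(S | 'P).
  apply/astabs_permP => x; have := tc x; rewrite wpE wpVE.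
  case: ifP => xS [] ->; rewrite ?(perm_closed _ wS) ?(perm_closed _ (perm_onV wS)) //.
    by apply/negbTE; rewrite -in_setC (perm_closed _ pS) inE xS.
  by apply/negbTE; rewrite -in_setC (perm_closed _ (perm_onV pS)) inE xS.
have tSC : t \in 'N(~: S | 'P) by rewrite astabsC.
exists (restr_perm S t) (restr_perm (~: S) t).
- apply/compatibleP => x; case xS: (x \in S).
    by have := tc x; rewrite restr_permE // wpE wpVE xS.
  by left; rewrite (out_perm (restr_perm_on _ _)) ?(out_perm wS) ?xS.
- apply/compatibleP => x; case xS: (x \in S).
    have xSC : x \notin ~: S by rewrite inE xS.
    by left; rewrite (out_perm (restr_perm_on _ _)) ?(out_perm pS).
  have xSC : x \in ~: S by rewrite inE xS.
  by have := tc x; rewrite restr_permE // wpE wpVE xS.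
- apply/permP => x; rewrite (mul_perm_onE _ (restr_perm_on _ _) (restr_perm_on _ _)).
  by case: ifP => xS; rewrite restr_permE // inE xS.
Qed.

Definition disjoint_supports l := pairwise (fun u v => [disjoint psupp u & psupp v]) l.

Lemma perm_on_prod S l : {in l, forall v, perm_on S v} -> perm_on S (\prod_(v <- l) v).
Proof.
elim: l => [|v l IH] lS; first by rewrite big_nil perm_on1.
rewrite big_cons; apply: perm_onM; first by apply: lS; rewrite mem_head.
by apply: IH => u lu; apply: lS; rewrite in_cons lu orbT.
Qed.

Lemma perm_on_prod_disjoint w l : all (fun v => [disjoint psupp w & psupp v]) l ->
  perm_on (~: psupp w) (\prod_(v <- l) v).
Proof.
move=> /allP wl; apply: perm_on_prod => v /wl.
by rewrite perm_onE -disjoints_subset disjoint_sym.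
Qed.

Lemma prod_perm_out l x : {in l, forall w, x \notin psupp w} -> (\prod_(w <- l) w) x = x.
Proof.
elim: l => [|v l IH] lx; first by rewrite big_nil perm1.
rewrite big_cons permM (out_perm (perm_on_psupp v)) ?lx ?mem_head //.
by apply: IH => w lw; apply: lx; rewrite in_cons lw orbT.
Qed.

Lemma prod_disjoint_supportsE l w x : disjoint_supports l -> w \in l -> x \in psupp w ->
  (\prod_(v <- l) v) x = w x.
Proof.
elim: l => // v l IH /= /andP[vl dl]; rewrite big_cons in_cons.
rewrite (mul_perm_onE _ (perm_on_psupp v) (perm_on_prod_disjoint vl)).
case: ifP => xv /predU1P[-> // | wl] xw.
- by rewrite (disjointFr (allP vl w wl) xv) in xw.
- by rewrite xw in xv.
- exact: IH.
Qed.

Lemma Xlist_compatible l : disjoint_supports l -> {in l, forall w, Xcyc w = compatible w} ->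
  Xlist l = compatible (\prod_(w <- l) w).
Proof.
elim: l => [|w l IH] /=; first by rewrite big_nil compatible1.
move=> /andP[wl dl] Xl; rewrite big_cons -compatibleM ?perm_on_prod_disjoint //.
rewrite Xl ?mem_head // -IH // => v lv.
by apply: Xl; rewrite in_cons lv orbT.
Qed.

Lemma prod_pairs_on b : perm_on [set x in b] (prod_pairs b).
Proof.
have [n] := ubnP (size b); elim: n b => // n IH [|x [|y b]] /= lt_b; rewrite ?perm_on1 //.
apply: perm_onM.
  rewrite perm_onE; apply: subset_trans (_ : [set x; y] \subset _).
    by rewrite -perm_onE tperm_on.
  by apply/subsetP => z; rewrite !inE => /orP[] ->; rewrite ?orbT.
rewrite perm_onE; apply: subset_trans (_ : [set x in b] \subset _).
  by rewrite -perm_onE IH //; lia.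
by apply/subsetP => z; rewrite !inE => ->; rewrite !orbT.
Qed.

Lemma prod_pairs_out b z : z \notin b -> prod_pairs b z = z.
Proof. by move=> zb; rewrite (out_perm (prod_pairs_on b)) ?inE. Qed.

Lemma prod_pairs_nth x0 b k : uniq b -> ~~ odd (size b) -> k < size b ->
  prod_pairs b (nth x0 b k) = nth x0 b (if odd k then k.-1 else k.+1).
Proof.
have [n] := ubnP (size b); elim: n b k => // n IH [|x [|y b]] // k /= lt_b.
rewrite !inE negb_or negbK => /and3P[/andP[xy xb] yb ub] even_b lt_k.
rewrite permM; case: k lt_k => [|[|k]] lt_k /=.
- by rewrite tpermL prod_pairs_out.
- by rewrite tpermR prod_pairs_out.
have bk : nth x0 b k \in b by apply: mem_nth.
rewrite tpermD; [|by apply: contraNneq xb => ->|by apply: contraNneq yb => ->].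
rewrite IH //; last by lia.
by case: k {lt_k bk} => [|k] //=; case: (odd k).
Qed.

Section Cycle.
Variable w : {perm T}.
Hypothesis w_cycle : forall y, y \in psupp w -> porbit w y = psupp w.
Local Notation s := #|psupp w|.

Section BasePoint.
Variable y : T.
Hypothesis y_supp : y \in psupp w.
Local Notation a k := (iter k w y).

Lemma card_cycle_gt0 : 0 < s.
Proof. by rewrite card_gt0; apply/set0Pn; exists y. Qed.

Lemma iter_cycle_supp k : a k \in psupp w.
Proof. by rewrite -(w_cycle y_supp) -permX mem_porbit. Qed.

Lemma iter_cycle_card : a s = y.
Proof. by rewrite -(w_cycle y_supp) iter_porbit. Qed.

Lemma iter_cycleD k : a (k + s) = a k.
Proof. by rewrite iterD iter_cycle_card. Qed.

Lemma uniq_cycle_traject : uniq (traject w y s).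
Proof. by have := uniq_traject_porbit w y; rewrite (w_cycle y_supp). Qed.

Lemma mem_cycle_traject z : (z \in traject w y s) = (z \in psupp w).
Proof. by have := porbit_traject w y z; rewrite (w_cycle y_supp) => <-. Qed.

Lemma cycle_iterP z : reflect (exists2 k, k < s & z = a k) (z \in psupp w).
Proof. by rewrite -mem_cycle_traject; apply: trajectP. Qed.

Lemma eq_on_cycle u v : perm_on (psupp w) u -> perm_on (psupp w) v ->
  (forall k, k < s -> u (a k) = v (a k)) -> u = v.
Proof.
move=> uS vS uv; apply/permP => z.
have [/cycle_iterP[k lt_k ->] | zS] := boolP (z \in psupp w); first exact: uv.
by rewrite (out_perm uS) ?(out_perm vS).
Qed.

Definition forward t k := t (a k) == w (a k).

Lemma compatible_cycleE t k : t \in compatible w ->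
  t (a k) = if forward t k then w (a k) else w^-1 (a k).
Proof.
move=> /compatibleP tw; rewrite /forward.
by case: (tw (a k)) => ->; [rewrite eqxx | case: eqP].
Qed.

(* By injectivity of [t], a backward step at [a k.+2] forces [a k.+2 = a k],
   and then it is a forward step as well. *)
Lemma forward_add2 t k : t \in compatible w -> forward t k -> forward t k.+2.
Proof.
move=> /compatibleP tw /eqP tk; rewrite /forward.
case: (tw (a k.+2)) => [-> // | tk2].
have a2 : a k.+2 = a k by apply: (@perm_inj _ t); rewrite tk2 tk /= permK.
by rewrite tk2 {2}a2 /= permK.
Qed.

Lemma forward_add_double t k m : t \in compatible w -> forward t k -> forward t (k + m.*2).
Proof.
move=> tc fk; elim: m => [|m IH]; first by rewrite addn0.
by rewrite doubleS !addnS; apply: forward_add2.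
Qed.

Lemma forward_period t k : forward t (k + s) = forward t k.
Proof. by rewrite /forward iter_cycleD. Qed.

Lemma forwardS_odd_cycle t k : odd s -> t \in compatible w -> forward t k.+1 = forward t k.
Proof.
move=> odd_s tc; have s_half : s = (s./2).*2.+1 by rewrite -{1}(odd_double_half s) odd_s.
apply/idP/idP => [fk1 | fk]; rewrite -forward_period.
  have -> : k + s = k.+1 + (s./2).*2 by lia.
  exact: forward_add_double.
have -> : k.+1 + s = k + (s./2).+1.*2 by lia.
exact: forward_add_double.
Qed.

Lemma forwardSS_even_cycle t k : ~~ odd s -> t \in compatible w ->
  forward t k.+2 = forward t k.
Proof.
move=> even_s tc; apply/idP/idP => [fk2 | ]; last exact: forward_add2.
have := odd_double_half s; rewrite (negbTE even_s) add0n => s_half.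
have s_gt0 := card_cycle_gt0; rewrite -forward_period.
have -> : k + s = k.+2 + (s./2).-1.*2 by lia.
exact: forward_add_double.
Qed.

Lemma forward_odd_cycle t k : odd s -> t \in compatible w -> forward t k = forward t 0.
Proof. by move=> odd_s tc; elim: k => // k IH; rewrite forwardS_odd_cycle. Qed.

Lemma forward_even_cycle t k : ~~ odd s -> t \in compatible w ->
  forward t k = forward t (odd k).
Proof.
move=> even_s tc; rewrite -{1}(odd_double_half k).
by elim: k./2 => [|m IH]; rewrite ?addn0 // doubleS !addnS forwardSS_even_cycle.
Qed.

Lemma compatible_even_cycleE t k : ~~ odd s -> t \in compatible w ->
  t (a k) = if forward t (odd k) then w (a k) else w^-1 (a k).
Proof. by move=> even_s tc; rewrite -forward_even_cycle // compatible_cycleE. Qed.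

Lemma prod_pairs_cycleE k : ~~ odd s -> k < s ->
  prod_pairs (traject w y s) (a k) = if odd k then w^-1 (a k) else w (a k).
Proof.
move=> even_s lt_k.
rewrite -{1}(nth_traject w lt_k y) prod_pairs_nth ?uniq_cycle_traject ?size_traject //.
case: ifP => odd_k.
  by case: k odd_k lt_k => // k _ lt_k; rewrite nth_traject ?(ltnW lt_k) //= permK.
have ne_s : k.+1 != s by apply: contraNneq even_s => <-; rewrite /= odd_k.
by rewrite nth_traject //; lia.
Qed.

Lemma perm_on_prod_pairs_cycle : perm_on (psupp w) (prod_pairs (traject w y s)).
Proof.
rewrite {1}(_ : psupp w = [set z in traject w y s]) ?prod_pairs_on //.
by apply/setP => z; rewrite inE mem_cycle_traject.
Qed.

Lemma prod_pairs_cycle_compatible : ~~ odd s -> prod_pairs (traject w y s) \in compatible w.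
Proof.
move=> even_s; apply/compatibleP => z.
have [/cycle_iterP[k lt_k ->] | zS] := boolP (z \in psupp w).
  by rewrite prod_pairs_cycleE //; case: ifP; [right | left].
by left; rewrite (out_perm perm_on_prod_pairs_cycle) ?(out_perm (perm_on_psupp w)).
Qed.

Lemma compatible_alternating t : ~~ odd s -> t \in compatible w ->
  forward t 0 -> ~~ forward t 1 -> t = prod_pairs (traject w y s).
Proof.
move=> even_s tc f0 f1.
apply: eq_on_cycle (compatible_perm_on tc) perm_on_prod_pairs_cycle _ => k lt_k.
rewrite compatible_even_cycleE // prod_pairs_cycleE //.
by case: (odd k); rewrite ?(negbTE f1) ?f0.
Qed.
End BasePoint.

Lemma compatible_odd_cycle t : odd s -> t \in compatible w -> t \in [set w; w^-1].
Proof.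
move=> odd_s tc; have [y y_supp] : exists y, y \in psupp w.
  by apply/set0Pn; apply: contraTneq odd_s => ->; rewrite cards0.
have w_on := perm_on_psupp w; have wV_on := perm_onV w_on.
rewrite !inE; apply/orP; case f0: (forward y t 0); [left | right]; apply/eqP;
  apply: (eq_on_cycle y_supp) (compatible_perm_on tc) _ _ => // k _;
  by rewrite compatible_cycleE // (forward_odd_cycle y_supp) ?f0.
Qed.

Lemma compatible_even_cycle y t : y \in psupp w -> ~~ odd s -> t \in compatible w ->
  t \in [set w; w^-1; prod_pairs (traject w y s);
                      prod_pairs (traject w (iter s.-1 w y) s)].
Proof.
move=> y_supp even_s tc; rewrite !inE -!orbA.
set y' := iter s.-1 w y; have y'_supp : y' \in psupp w := iter_cycle_supp y_supp _.
have odd_s1 : odd s.-1.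
  by move: even_s; rewrite -{1}(prednK (card_cycle_gt0 y_supp)) /= negbK.
have forward_y' k : forward y' t k = forward y t (k + s.-1) by rewrite /forward iterD.
have w_on := perm_on_psupp w; have wV_on := perm_onV w_on.
have t_on := compatible_perm_on tc.
case f0: (forward y t 0); case f1: (forward y t 1).
- apply/or4P; constructor 1; apply/eqP; apply: (eq_on_cycle y_supp) => // k _.
  by rewrite (compatible_even_cycleE y_supp) //; case: (odd k); rewrite ?f0 ?f1.
- apply/or4P; constructor 3; apply/eqP.
  by apply: (compatible_alternating y_supp) => //; rewrite f1.
- apply/or4P; constructor 4; apply/eqP.
  apply: (compatible_alternating y'_supp) => //.
    by rewrite forward_y' add0n (forward_even_cycle y_supp) // odd_s1.
  by rewrite forward_y' add1n prednK ?(card_cycle_gt0 y_supp) // -[s]add0n forward_period ?f0.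
- apply/or4P; constructor 2; apply/eqP; apply: (eq_on_cycle y_supp) => // k _.
  by rewrite (compatible_even_cycleE y_supp) //; case: (odd k); rewrite ?f0 ?f1.
Qed.

Lemma Xcyc_compatible : Xcyc w = compatible w.
Proof.
rewrite /Xcyc /=; case: ifP => [odd_s | /negbT even_s].
  apply/setP => t; apply/idP/idP => [|/(compatible_odd_cycle odd_s)//].
  by rewrite in_set2 => /orP[] /eqP ->; rewrite ?compatible_id ?compatibleV.
case: pickP => [y y_supp | no_supp]; last first.
  have w1 : w = 1 by apply: perm_on_id (perm_on_psupp w) _; rewrite (eq_card0 no_supp).
  by rewrite w1 invg1 compatible1 setUid.
have -> : rotr 1 (traject w y s) = traject w (iter s.-1 w y) s.
  move: (card_cycle_gt0 y_supp) (iter_cycle_card y_supp).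
  by case: #|psupp w| => // m _; apply: rotr1_traject.
apply/setP => t; apply/idP/idP => [|/(compatible_even_cycle y_supp even_s)//].
rewrite !in_setU !in_set1 -!orbA => /or4P[] /eqP ->; rewrite ?compatible_id ?compatibleV //;
  by apply: prod_pairs_cycle_compatible => //; apply: iter_cycle_supp.
Qed.
End Cycle.

Section CycleDecomposition.
Variable sigma : {perm T}.
Implicit Type O : {set T}.

Lemma porbit_closed O x : O \in porbits sigma -> (sigma x \in O) = (x \in O).
Proof.
case/imsetP => y _ ->; rewrite -!eq_porbit_mem.
by have := porbit_perm sigma 1 x; rewrite expg1 => ->.
Qed.

Lemma restr_porbitE O x : O \in porbits sigma -> x \in O -> restr_perm O sigma x = sigma x.
Proof.
by move=> PO xO; rewrite restr_permE //; apply/astabs_permP => z; rewrite porbit_closed.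
Qed.

Lemma porbits_eq O x : O \in porbits sigma -> x \in O -> O = porbit sigma x.
Proof. by case/imsetP => y _ -> xO; apply/esym/eqP; rewrite eq_porbit_mem. Qed.

Lemma card_porbit_gt1 x : (1 < #|porbit sigma x|) = (sigma x != x).
Proof.
apply/idP/idP => [|mx].
  apply: contraTneq => sx; rewrite -leqNgt -(cards1 x); apply: subset_leq_card.
  by apply/subsetP => z /porbitP[i ->]; rewrite permX_fix ?inE.
have sub2 : [set x; sigma x] \subset porbit sigma x.
  apply/subsetP => z; rewrite !inE => /orP[] /eqP ->; first exact: porbit_id.
  by have := mem_porbit sigma 1 x; rewrite expg1.
by have := subset_leq_card sub2; rewrite cards2 eq_sym mx.
Qed.

Lemma psupp_restr_porbit O : O \in porbits sigma -> 1 < #|O| ->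
  psupp (restr_perm O sigma) = O.
Proof.
move=> PO O_gt1; apply/setP => z; rewrite inE.
case zO: (z \in O); last by rewrite (out_perm (restr_perm_on _ _)) ?zO ?eqxx.
by rewrite restr_porbitE // -card_porbit_gt1 -(porbits_eq PO zO).
Qed.

Lemma restr_porbit_cycle O y : O \in porbits sigma -> 1 < #|O| ->
  y \in psupp (restr_perm O sigma) ->
  porbit (restr_perm O sigma) y = psupp (restr_perm O sigma).
Proof.
move=> PO O_gt1; rewrite psupp_restr_porbit // => yO.
have iterE i : iter i (restr_perm O sigma) y = iter i sigma y.
  elim: i => //= i ->; apply: restr_porbitE => //.
  by rewrite (porbits_eq PO yO) -permX mem_porbit.
apply/setP => z; apply/porbitP/idP => [[i ->] | zO].
  by rewrite permX iterE (porbits_eq PO yO) -permX mem_porbit.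
have /porbitP[i ->] : z \in porbit sigma y by rewrite -(porbits_eq PO yO).
by exists i; rewrite !permX iterE.
Qed.

Lemma mem_cycles w : w \in cycles sigma ->
  exists O, [/\ O \in porbits sigma, 1 < #|O| & w = restr_perm O sigma].
Proof. by case/imsetP => O; rewrite inE => /andP[PO O_gt1] ->; exists O. Qed.

Lemma disjoint_supports_cycles : disjoint_supports (enum (cycles sigma)).
Proof.
apply: (@sub_in_pairwise _ (mem (cycles sigma)) [rel u v | u != v]); last first.
- by rewrite -uniq_pairwise enum_uniq.
- by apply/allP => w; rewrite mem_enum.
move=> u v /mem_cycles[O1 [PO1 O1_gt1 ->]] /mem_cycles[O2 [PO2 O2_gt1 ->]] /= ne.
rewrite !psupp_restr_porbit // disjoints_subset; apply/subsetP => z zO1.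
rewrite inE; apply: contra ne => zO2.
by rewrite (porbits_eq PO1 zO1) (porbits_eq PO2 zO2).
Qed.

Lemma prod_cycles : \prod_(w <- enum (cycles sigma)) w = sigma.
Proof.
apply/permP => x; have [sx | mx] := eqVneq (sigma x) x.
  rewrite prod_perm_out ?sx // => w; rewrite mem_enum => /mem_cycles[O [PO O_gt1 ->]].
  rewrite psupp_restr_porbit //; apply: contraTN O_gt1 => xO.
  by rewrite (porbits_eq PO xO) card_porbit_gt1 sx eqxx.
have Px : porbit sigma x \in porbits sigma by apply: imset_f.
have x_gt1 : 1 < #|porbit sigma x| by rewrite card_porbit_gt1.
rewrite (@prod_disjoint_supportsE _ (restr_perm (porbit sigma x) sigma)).
- exact: restr_porbitE (porbit_id _ _).
- exact: disjoint_supports_cycles.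
- by rewrite mem_enum; apply/imsetP; exists (porbit sigma x); rewrite // inE Px.
- by rewrite psupp_restr_porbit ?porbit_id.
Qed.

Lemma Xperm_compatible : Xperm sigma = compatible sigma.
Proof.
rewrite /Xperm Xlist_compatible ?prod_cycles ?disjoint_supports_cycles //.
move=> w; rewrite mem_enum => /mem_cycles[O [PO O_gt1 ->]].
by apply: Xcyc_compatible => y; apply: restr_porbit_cycle.
Qed.
End CycleDecomposition.
End CompatiblePerms.

Import GRing.Theory.
Local Open Scope ring_scope.

Lemma gmf_Smat n (G : {group 'S_n}) (chi : 'S_n -> algC) (sigma : 'S_n) :
  gmf G chi (Smat sigma) = \sum_(t in compatible sigma) chihat G chi t.
Proof.
rewrite /gmf (bigID (mem (compatible sigma))) /= [X in _ + X]big1 ?addr0 => [|t].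
  apply: eq_bigr => t /compatibleP tc; rewrite big1 ?mulr1 // => i _.
  by rewrite mxE; case: (tc i) => ->; rewrite eqxx ?orbT.
rewrite inE negb_forall => /existsP[i ti]; rewrite (bigD1 i) //= mxE.
by move: ti; rewrite ![_ == t i]eq_sym => /negbTE ->; rewrite mul0r mulr0.
Qed.

Unset Implicit Arguments.

Theorem mainTheorem4 (n : nat) (hn : (1 <= n)%N) (G : {group 'S_n})
  (chi : 'S_n -> algC) (sigma : 'S_n) :
  gmf G chi (Smat sigma) = \sum_(tau in Xperm sigma) chihat G chi tau.
Proof. by rewrite gmf_Smat Xperm_compatible. Qed.
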